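(* Let $(G,v)$ be a Hamel space over an ordered field $C$, let $P\subseteq G$ be a downward closed subset of $(G,<_0)$, and let $(b_\rho)$ be a divergent pc-sequence in $G$. Then there are an extension $(G',v')$ of $(G,v)$ and an element $h\in G'$ such that (1) $b_\rho\leadsto h$ (in $(G',v')$); (2) $P<_0h<_0G\setminus P$; and (3) for any embedding of Hamel spaces $i:(G,v)\to(G^*,v^* )$ and any $h^*\in G^*$ with $i(b_\rho)\leadsto h^*$ and $i(P)<_0h^*<_0i(G\setminus P)$, there is an extension of $i$ to an embedding $(G',v')\to(G^*,v^* )$ sending $h$ to $h^*$.
   Context: Let $C$ be an ordered field. A $2$-ordered $C$-vector space is a $C$-vector space $G$ with two total orderings $<_0,<_1$ such that $G$ is an ordered $C$-vector space with respect to each. Put $G_\infty=G\cup\{\infty\}$, with $G<_0\infty$, $G<_1\infty$. A Hamel valuation on $G$ is a map $v:G\to G_\infty$ such that for all $x,y\in G$ and $\lambda\in C^{\times}$: $v(x)=\infty$ iff $x=0$; $v(x+y)\ge_0\min_0(v(x),v(y))$; $v(\lambda x)=v(x)$; if $0<_1x<_1y$ then $v(x)\ge_0v(y)$; $v(v(x))=v(x)$ (with $v(\infty)=\infty$); and $v(x)>_10$. A Hamel space is such a pair $(G,v)$. $(G',v')$ is an extension of $(G,v)$ if $G$ is a $C$-subspace of $G'$, both orderings on $G$ are restrictions of those on $G'$, and $v'|_G=v$. An embedding $i:(G,v)\to(G',v')$ is an injective $C$-linear map preserving $<_0$ and $<_1$ with $i(v(x))=v'(i(x))$. A well-indexed sequence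 is a sequence $(b_\rho)$ indexed by an infinite well-ordered set without a greatest element. It is a pc-sequence (pseudo-Cauchy, with respect to $v$ and the ordering $<_0$ on values) if there is an index $\rho_0$ such that for all $\tau>\sigma>\rho>\rho_0$, $v(b_\tau-b_\sigma)>_0v(b_\sigma-b_\rho)$. For an element $a$, $b_\rho\leadsto a$ ($a$ is a pseudolimit) means $(v(a-b_\rho))$ is eventually strictly $<_0$-increasing. The pc-sequence is divergent in $G$ if it has no pseudolimit in $G$. *)

From HB Require Import structures.
From mathcomp Require Import all_boot all_order all_algebra.
Set Implicit Arguments. Unset Strict Implicit. Unset Printing Implicit Defensive.
Import Order.TTheory GRing.Theory Num.Theory.
Local Open Scope ring_scope.

Section Defs.
Variable C : realFieldType.

Definition ordered_vs_order (G : lmodType C) (lt : G -> G -> Prop) : Prop :=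
  [/\ (forall x, ~ lt x x),
      (forall x y z, lt x y -> lt y z -> lt x z),
      (forall x y, lt x y \/ x = y \/ lt y x),
      (forall x y z, lt x y -> lt (x + z) (y + z)) &
      (forall (c : C) x, 0 < c -> lt 0 x -> lt 0 (c *: x))].

(* G_infty = option G, with None = infinity, the top element *)
Definition ltinf (G : Type) (lt : G -> G -> Prop) (a b : option G) : Prop :=
  match a, b with
  | Some x, Some y => lt x y
  | Some _, None => True
  | None, _ => False
  end.

Definition leinf (G : Type) (lt : G -> G -> Prop) (a b : option G) : Prop :=
  ltinf lt a b \/ a = b.

Definition vinf (G : Type) (v : G -> option G) (a : option G) : option G :=
  match a with Some x => v x | None => None end.

Record hamel := Hamel {
  hcar : lmodType C;
  hlt0 : hcar -> hcar -> Prop;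
  hlt1 : hcar -> hcar -> Prop;
  hv : hcar -> option hcar;
  hlt0_ovs : ordered_vs_order hlt0;
  hlt1_ovs : ordered_vs_order hlt1;
  hv_inf : forall x, hv x = None <-> x = 0;
  hv_add : forall x y, leinf hlt0 (hv x) (hv (x + y)) \/ leinf hlt0 (hv y) (hv (x + y));
  hv_scale : forall (l : C) x, l != 0 -> hv (l *: x) = hv x;
  hv_mono : forall x y, hlt1 0 x -> hlt1 x y -> leinf hlt0 (hv y) (hv x);
  hv_idem : forall x, vinf hv (hv x) = hv x;
  hv_pos : forall x, ltinf hlt1 (Some 0) (hv x)
}.

Definition hamel_embedding (H K : hamel) (f : hcar H -> hcar K) : Prop :=
  [/\ (forall (a : C) x y, f (a *: x + y) = a *: f x + f y),
      injective f,
      (forall x y, hlt0 x y -> hlt0 (f x) (f y)),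
      (forall x y, hlt1 x y -> hlt1 (f x) (f y)) &
      (forall x, omap f (hv x) = hv (f x))].

(* well-indexed: infinite well-ordered index set without greatest element
   (nonempty + no greatest element; infiniteness follows) *)
Definition well_indexed (I : Type) (ltI : I -> I -> Prop) : Prop :=
  (forall i, ~ ltI i i) /\
  (forall i j k, ltI i j -> ltI j k -> ltI i k) /\
  (forall i j, ltI i j \/ i = j \/ ltI j i) /\
  well_founded ltI /\
  inhabited I /\
  (forall i, exists j, ltI i j).

Definition pc_seq (H : hamel) (I : Type) (ltI : I -> I -> Prop) (b : I -> hcar H) : Prop :=
  exists r0, forall t s r, ltI r0 r -> ltI r s -> ltI s t ->
    ltinf (@hlt0 H) (hv (b s - b r)) (hv (b t - b s)).

Definition pseudolim (H : hamel) (I : Type) (ltI : I -> I -> Prop) (b : I -> hcar H)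
  (a : hcar H) : Prop :=
  exists r0, forall r s, ltI r0 r -> ltI r s ->
    ltinf (@hlt0 H) (hv (a - b r)) (hv (a - b s)).

Definition divergent (H : hamel) (I : Type) (ltI : I -> I -> Prop) (b : I -> hcar H) : Prop :=
  forall a : hcar H, ~ pseudolim ltI b a.

End Defs.

From HB Require Import structures.
From mathcomp Require Import all_boot all_order all_algebra.
From mathcomp Require Import lra.
From Stdlib Require Import Classical ClassicalEpsilon.
Set Implicit Arguments. Unset Strict Implicit. Unset Printing Implicit Defensive.
Import Order.TTheory GRing.Theory Num.Theory.
Local Open Scope ring_scope.

(* Adjoin h formally: G' = G + C h, encoded as pairs (g, l) for g + l h.  For
   l != 0, write g + l h = -l (a - h) with a = -g/l; since (b_rho) is divergent,
   a is not a pseudolimit, so v(a - b_rho) < v(b_sigma - b_rho) for some rho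
   and all sigma > rho.  Hence the value and the <_1-sign of g + l b_sigma are
   eventually constant, and they define v' and <_1 on G'.  The order <_0 is the
   one making h fill the cut (P, G \ P).  Given i and h* as in (3), h* is a
   pseudolimit of (i b_rho), so v*(h* - i b_rho) eventually exceeds the value of
   g + l b_rho; therefore g + l h |-> i g + l h* preserves v and both orders. *)

Definition le_of (T : Type) (lt : T -> T -> Prop) (x y : T) : Prop := lt x y \/ x = y.

Section OrderedVectorSpace.
Variables (C : realFieldType) (V : lmodType C) (lt : V -> V -> Prop).
Hypothesis ovs : ordered_vs_order lt.
Local Notation le := (le_of lt).

Lemma ovs_irr x : ~ lt x x. Proof. by case: ovs. Qed.
Lemma ovs_trans x y z : lt x y -> lt y z -> lt x z.
Proof. by case: ovs => _ + _ _ _; apply. Qed.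
Lemma ovs_total x y : lt x y \/ x = y \/ lt y x. Proof. by case: ovs. Qed.
Lemma ovs_addr x y z : lt x y -> lt (x + z) (y + z).
Proof. by case: ovs => _ _ _ + _; apply. Qed.
Lemma ovs_scale_gt0 (c : C) x : 0 < c -> lt 0 x -> lt 0 (c *: x).
Proof. by case: ovs => _ _ _ _; apply. Qed.

Lemma ovs_subr_gt0 x y : lt 0 (y - x) <-> lt x y.
Proof.
split=> h; first by have := ovs_addr x h; rewrite add0r subrK.
by have := ovs_addr (- x) h; rewrite subrr.
Qed.

Lemma ovs_add_gt0 x y : lt 0 x -> lt 0 y -> lt 0 (x + y).
Proof. by move=> hx hy; apply: ovs_trans hy _; have := ovs_addr y hx; rewrite add0r. Qed.

Lemma ovs_le_lt_add x y : le 0 x -> lt 0 y -> lt 0 (x + y).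
Proof. by case=> [hx|<-] hy; [apply: ovs_add_gt0|rewrite add0r]. Qed.

Lemma ovs_le_add x y : le 0 x -> le 0 y -> le 0 (x + y).
Proof. by move=> hx [hy|<-]; [left; apply: ovs_le_lt_add|rewrite addr0]. Qed.

Lemma ovs_oppr_gt0 x : lt 0 (- x) <-> lt x 0.
Proof. by rewrite -[lt x 0]ovs_subr_gt0 sub0r. Qed.

Lemma ovs_scale_sub_gt0 (l : C) x y :
  (0 < l /\ lt x y) \/ (l < 0 /\ lt y x) -> lt 0 (l *: (y - x)).
Proof.
case=> [[hl /ovs_subr_gt0]|[hl /ovs_subr_gt0 hyx]]; first exact: ovs_scale_gt0.
by rewrite -opprB scalerN -scaleNr; apply: ovs_scale_gt0; rewrite // oppr_gt0.
Qed.

Lemma ovs_scale_ge0 (c : C) x : 0 < c -> le 0 x -> le 0 (c *: x).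
Proof. by move=> hc [hx|<-]; [left; apply: ovs_scale_gt0|right; rewrite scaler0]. Qed.

Lemma ovs_ge0_total x : le 0 x \/ le 0 (- x).
Proof.
case: (ovs_total 0 x) => [|[|/ovs_oppr_gt0]]; by [left; left|left; right|right; left].
Qed.

End OrderedVectorSpace.

Section ValueOrder.
Variables (C : realFieldType) (V : lmodType C) (lt : V -> V -> Prop).
Hypothesis ovs : ordered_vs_order lt.
Local Notation ltv := (ltinf lt).
Local Notation lev := (leinf lt).

Lemma ltinf_irr a : ~ ltv a a.
Proof. by case: a => //= x; apply: ovs_irr. Qed.

Lemma ltinf_trans a b c : ltv a b -> ltv b c -> ltv a c.
Proof. by case: a => [x|] //; case: b => [y|] //; case: c => [z|] //=; apply: ovs_trans. Qed.

Lemma leinf_lt_trans a b c : lev a b -> ltv b c -> ltv a c.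
Proof. by case=> [|->] //; apply: ltinf_trans. Qed.

Lemma ltinf_le_trans a b c : ltv a b -> lev b c -> ltv a c.
Proof. by move=> hab [|<-] //; apply: ltinf_trans. Qed.

Lemma leinf_trans a b c : lev a b -> lev b c -> lev a c.
Proof. by case=> [hab|->] // hbc; left; apply: ltinf_le_trans hbc. Qed.

Lemma ltinfNge a b : ltv a b -> ~ lev b a.
Proof. by move=> hab /(ltinf_le_trans hab) /ltinf_irr. Qed.

Lemma leinfNlt a b : ~ ltv a b -> lev b a.
Proof.
case: a => [x|]; case: b => [y|] //=; try by [left|right].
by case: (ovs_total ovs x y) => [|[->|]]; by [|right|left].
Qed.

Lemma leinf_anti a b : lev a b -> lev b a -> a = b.
Proof. by case=> [/ltinfNge|] //. Qed.

End ValueOrder.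

Section HamelValuation.
Variables (C : realFieldType) (H : hamel C).
Local Notation lt0 := (@hlt0 C H).
Local Notation lt1 := (@hlt1 C H).
Local Notation v := (@hv C H).
Local Notation O0 := (hlt0_ovs H).
Local Notation O1 := (hlt1_ovs H).

Lemma hv0 : v 0 = None. Proof. exact/hv_inf. Qed.

Lemma hv_opp x : v (- x) = v x.
Proof. by rewrite -scaleN1r hv_scale // oppr_eq0 oner_eq0. Qed.

Lemma hv_ge_add a x y : leinf lt0 a (v x) -> leinf lt0 a (v y) -> leinf lt0 a (v (x + y)).
Proof. by move=> hx hy; case: (hv_add x y); apply: (leinf_trans O0). Qed.

Lemma hv_add_lt x y : ltinf lt0 (v x) (v y) -> v (x + y) = v x.
Proof.
move=> hxy; apply: (leinf_anti O0).
  case: (hv_add (x + y) (- y)); rewrite addrK // hv_opp => /(ltinfNge O0 hxy) [].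
by case: (hv_add x y) => // /(ltinf_le_trans O0 hxy); left.
Qed.

Lemma hv_add_lt_sign x y : ltinf lt0 (v x) (v y) -> lt1 0 x -> lt1 0 (x + y).
Proof.
move=> hxy hx; case: (ovs_total O1 0 (x + y)) => [//|[e|hxy0]].
  by move: hxy; rewrite -[y](addKr x) -e addr0 hv_opp => /(ltinf_irr O0).
have /(hv_mono hx) : lt1 x (- y) by have := ovs_addr O1 (- y) hxy0; rewrite addrK add0r.
by rewrite hv_opp => /(ltinfNge O0 hxy).
Qed.

Lemma hv_add_lt_signE x y : ltinf lt0 (v x) (v y) -> (lt1 0 (x + y) <-> lt1 0 x).
Proof.
move=> hxy; split; last exact: hv_add_lt_sign.
by rewrite -{2}(addrK y x); apply: hv_add_lt_sign; rewrite hv_opp hv_add_lt.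
Qed.

End HamelValuation.

Section Embedding.
Variables (C : realFieldType) (H K : hamel C) (f : hcar H -> hcar K).
Hypothesis hf : hamel_embedding f.

Lemma emb_lin a x y : f (a *: x + y) = a *: f x + f y. Proof. by case: hf. Qed.
Lemma emb_add x y : f (x + y) = f x + f y.
Proof. by have := emb_lin 1 x y; rewrite !scale1r. Qed.
Lemma emb0 : f 0 = 0.
Proof. by have := emb_lin (-1) 0 0; rewrite !scaleN1r !addNr. Qed.
Lemma emb_scale a x : f (a *: x) = a *: f x.
Proof. by have := emb_lin a x 0; rewrite !addr0 emb0 addr0. Qed.
Lemma emb_sub x y : f (x - y) = f x - f y.
Proof. by rewrite emb_add -scaleN1r emb_scale scaleN1r. Qed.
Lemma emb_lt0 x y : hlt0 x y -> hlt0 (f x) (f y). Proof. by case: hf => _ _ + _ _; apply. Qed.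
Lemma emb_lt1 x y : hlt1 x y -> hlt1 (f x) (f y). Proof. by case: hf => _ _ _ + _; apply. Qed.
Lemma emb_hv x : omap f (hv x) = hv (f x). Proof. by case: hf. Qed.

Lemma emb_leinf a b : leinf (@hlt0 C H) a b -> leinf (@hlt0 C K) (omap f a) (omap f b).
Proof.
case=> [|->]; last by right.
by case: a => [x|] //; case: b => [y|] //= hxy; left => /=; [apply: emb_lt0|].
Qed.

End Embedding.

Section Cone.
Variables (C : realFieldType) (V : lmodType C) (pos : V -> Prop).
Hypotheses (pos0 : ~ pos 0) (pos_total : forall x, pos x \/ x = 0 \/ pos (- x)).
Hypotheses (posD : forall x y, pos x -> pos y -> pos (x + y))
           (posZ : forall (c : C) x, 0 < c -> pos x -> pos (c *: x)).

Lemma cone_ordered_vs : ordered_vs_order (fun x y => pos (y - x)).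
Proof.
split.
- by move=> x; rewrite subrr.
- by move=> x y z hxy hyz; have := posD hyz hxy; rewrite addrA subrK.
- move=> x y; case: (pos_total (y - x)) => [|[/eqP|]]; first by left.
    by rewrite subr_eq0 => /eqP ->; right; left.
  by rewrite opprB; right; right.
- by move=> x y z; rewrite opprD addrACA subrr addr0.
- by move=> c x hc; rewrite !subr0; apply: posZ.
Qed.

End Cone.

Section EvalAt.
Variables (C : realFieldType) (V : lmodType C).

Definition eval_at (t : V) (x : V * C^o) : V := x.1 + x.2 *: t.

Lemma eval_at0 t : eval_at t 0 = 0.
Proof. by rewrite /eval_at scale0r addr0. Qed.

Lemma eval_atD t x y : eval_at t (x + y) = eval_at t x + eval_at t y.
Proof. by rewrite /eval_at /= scalerDl addrACA. Qed.

Lemma eval_atN t x : eval_at t (- x) = - eval_at t x.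
Proof. by rewrite /eval_at /= scaleNr opprD. Qed.

Lemma eval_atZ t (c : C) x : eval_at t (c *: x) = c *: eval_at t x.
Proof. by rewrite /eval_at /= scalerDr scalerA. Qed.

Lemma eval_at_const t g : eval_at t (g, 0) = g.
Proof. by rewrite /eval_at scale0r addr0. Qed.

Lemma eval_at_shift t u x : eval_at u x = eval_at t x + x.2 *: (u - t).
Proof. by rewrite /eval_at scalerBr addrACA subrr addr0. Qed.

End EvalAt.

Lemma iff_negb (b : bool) (Q : Prop) : (b <-> Q) -> (~~ b <-> ~ Q).
Proof.
case: b => /= h; split=> //; first by move=> nq; case: nq; apply/h.
by move=> _ /h.
Qed.

Lemma niff_negb (b : bool) (Q : Prop) : ~ (b <-> Q) -> (~~ b <-> Q).
Proof.
case: b => /= h; split=> //; first by move=> q; case: h.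
by move=> _; apply: NNPP => nq; apply: h; split.
Qed.

Section SignFacts.
Variable C : realFieldType.
Implicit Types l m : C.

Lemma gt0_addr_same_sign l m : l != 0 -> (0 < l) = (0 < m) -> (0 < l + m) = (0 < l).
Proof.
rewrite neq_lt => /orP[hl|hl]; last by rewrite hl => /esym hm; rewrite addr_gt0.
rewrite (lt_gtF hl) => /esym/negbT; rewrite -leNgt => hm.
by apply/negbTE; rewrite -leNgt; lra.
Qed.

Lemma gt0_div_same_sign l m : l != 0 -> m != 0 -> (0 < l) = (0 < m) -> 0 < m / l.
Proof.
rewrite neq_lt => /orP[hl|hl] hm0; last by rewrite hl => /esym hm; rewrite divr_gt0.
rewrite (lt_gtF hl) => /esym/negbT; rewrite -leNgt le_eqVlt (negbTE hm0) /= => hm.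
by rewrite nmulr_rgt0 // invr_lt0.
Qed.

Lemma gt0_opp_sign l m : l != 0 -> l + m = 0 -> (0 < m) = ~~ (0 < l).
Proof.
move=> hl hlm; have -> : m = - l by apply/eqP; rewrite -addr_eq0 addrC hlm.
rewrite oppr_gt0; move: hl; rewrite neq_lt => /orP[hl|hl].
  by rewrite hl (lt_gtF hl).
by rewrite hl ltNge ltW.
Qed.

End SignFacts.

Section Cut.
Variables (C : realFieldType) (V : lmodType C) (lt : V -> V -> Prop).
Hypothesis ovs : ordered_vs_order lt.
Variable P : V -> Prop.
Hypothesis P_down : forall x y, lt y x -> P x -> P y.
Local Notation le := (le_of lt).

(* Positivity of [g + l h] for a new [h] with [P < h < V \ P]: for [l != 0] it
   holds iff [g + l u >= 0] for some [u] on the side of the cut where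
   [t |-> g + l t] is smaller than at [h]. *)
Definition cut_pos (x : V * C^o) : Prop :=
  if x.2 == 0 then lt 0 x.1
  else exists2 u, (0 < x.2 <-> P u) & le 0 (eval_at u x).

Lemma cut_lt u t : P u -> ~ P t -> lt u t.
Proof.
move=> pu npt; case: (ovs_total ovs u t) => [//|[eut|htu]].
  by rewrite eut in pu.
by case: npt; apply: P_down htu pu.
Qed.

Lemma cut_pos_far x t : cut_pos x -> x.2 != 0 -> (0 < x.2 <-> ~ P t) ->
  lt 0 (eval_at t x).
Proof.
rewrite /cut_pos => + hx; rewrite (negbTE hx) => -[u hu hxu] ht.
rewrite (eval_at_shift u); apply: (ovs_le_lt_add ovs hxu); apply: (ovs_scale_sub_gt0 ovs).
move: hx; rewrite neq_lt => /orP[hl|hl]; last first.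
  by left; split=> //; apply: cut_lt; [apply/hu|apply/ht].
right; split=> //; apply: cut_lt; last by move/hu; rewrite ltNge ltW.
by apply: NNPP => /ht; rewrite ltNge ltW.
Qed.

Lemma cut_pos_const g : cut_pos (g, 0) <-> lt 0 g.
Proof. by rewrite /cut_pos eqxx. Qed.

Lemma cut_posE x : x.2 != 0 ->
  cut_pos x <-> exists2 u, (0 < x.2 <-> P u) & le 0 (eval_at u x).
Proof. by rewrite /cut_pos => /negbTE ->. Qed.

Lemma cut_pos_root x u : x.2 != 0 -> (0 < x.2 <-> P u) -> eval_at u x = 0 -> cut_pos x.
Proof. by rewrite /cut_pos => /negbTE -> hu hxu; exists u; last right. Qed.

Lemma cut_pos0 : ~ cut_pos 0.
Proof. by rewrite /cut_pos eqxx; apply: ovs_irr. Qed.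

Lemma cut_pos_total x : cut_pos x \/ x = 0 \/ cut_pos (- x).
Proof.
case: x => g l; have [->|hl] := eqVneq l 0.
  rewrite /cut_pos /= oppr0 eqxx (ovs_oppr_gt0 ovs).
  by case: (ovs_total ovs 0 g) => [|[<-|]]; [left|right; left|right; right].
set a := - (l^-1 *: g).
have ha : eval_at a (g, l) = 0 by rewrite /eval_at /= scalerN scalerA mulfV // scale1r subrr.
case: (classic (0 < l <-> P a)) => hside; first by left; apply: cut_pos_root ha.
right; right; apply: (@cut_pos_root _ a); first by rewrite /= oppr_eq0.
  rewrite /= (gt0_opp_sign hl (subrr l)).
  exact: niff_negb.
by rewrite eval_atN ha oppr0.
Qed.

Lemma cut_pos_ge_mono x s u :
  le 0 (x.2 *: (u - s)) -> le 0 (eval_at s x) -> le 0 (eval_at u x).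
Proof. by move=> hsu hs; rewrite (eval_at_shift s); apply: ovs_le_add. Qed.

Lemma cut_posD_const g y : lt 0 g -> cut_pos y -> cut_pos ((g, 0) + y).
Proof.
rewrite /cut_pos [((g, 0) + y).2]/= add0r => hg; case: ifP => _ hy.
  by rewrite /=; apply: ovs_add_gt0.
case: hy => u hu hyu; exists u => //; left.
by rewrite eval_atD eval_at_const addrC; exact: (ovs_le_lt_add ovs hyu hg).
Qed.

Lemma cut_pos_common_witness x y : x.2 != 0 -> y.2 != 0 -> (x + y).2 != 0 ->
  cut_pos x -> cut_pos y ->
  exists2 u, (0 < (x + y).2 <-> P u) & le 0 (eval_at u x) /\ le 0 (eval_at u y).
Proof.
move=> hx hy hxy cx cy.
have [s hs hxs] := (cut_posE hx).1 cx; have [t ht hyt] := (cut_posE hy).1 cy.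
have [same|opp] := eqVneq (0 < x.2) (0 < y.2).
  have hsum : (0 < (x + y).2) = (0 < x.2) := gt0_addr_same_sign hx same.
  case: (ovs_ge0_total ovs (x.2 *: (t - s))) => hst.
    by exists t; [rewrite hsum same|split=> //; apply: cut_pos_ge_mono hxs].
  exists s; [by rewrite hsum|split=> //; apply: cut_pos_ge_mono hyt].
  have -> : y.2 *: (s - t) = (y.2 / x.2) *: - (x.2 *: (t - s)).
    by rewrite -scalerN -opprB scalerA mulfVK.
  exact: (ovs_scale_ge0 ovs (gt0_div_same_sign hx hy same)).
have hyx : (0 < y.2) = ~~ (0 < x.2) by move: opp; case: (0 < x.2); case: (0 < y.2).
have hxt : lt 0 (eval_at t x).
  by apply: cut_pos_far cx hx _; have := iff_negb ht; rewrite hyx negbK.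
have hys : lt 0 (eval_at s y) by apply: cut_pos_far cy hy _; rewrite hyx; apply: iff_negb.
have [->|hne] := eqVneq (0 < (x + y).2) (0 < x.2); first by exists s => //; split; last left.
exists t; last by split; first left.
suff -> : (0 < (x + y).2) = (0 < y.2) by [].
by rewrite hyx; move: hne; case: (0 < (x + y).2); case: (0 < x.2).
Qed.

Lemma cut_posD x y : cut_pos x -> cut_pos y -> cut_pos (x + y).
Proof.
have [x20|hx] := eqVneq x.2 0.
  by case: x x20 => g _ /= -> /cut_pos_const; apply: cut_posD_const.
have [y20|hy] := eqVneq y.2 0.
  by case: y y20 => g _ /= -> cx /cut_pos_const hg; rewrite addrC; apply: cut_posD_const.
move=> cx cy; have [hxy|hxy] := eqVneq (x + y).2 0.
  have [t ht hyt] := (cut_posE hy).1 cy.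
  have hxt : lt 0 (eval_at t x).
    apply: cut_pos_far cx hx _; rewrite (gt0_opp_sign hy); last by rewrite addrC.
    exact: iff_negb.
  have -> : cut_pos (x + y) = lt 0 (eval_at t x + eval_at t y).
    by rewrite -eval_atD /cut_pos /eval_at hxy eqxx scale0r addr0.
  by rewrite addrC; apply: (ovs_le_lt_add ovs hyt).
have [u hu [hxu hyu]] := cut_pos_common_witness hx hy hxy cx cy.
by apply/(cut_posE hxy); exists u; rewrite // eval_atD; apply: ovs_le_add.
Qed.

Lemma cut_posZ (c : C) x : 0 < c -> cut_pos x -> cut_pos (c *: x).
Proof.
move=> hc; rewrite /cut_pos /= mulf_eq0 (gt_eqF hc) /=; case: ifP => _.
  exact: ovs_scale_gt0.
case=> u hu hxu; exists u; first by rewrite pmulr_rgt0.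
by rewrite eval_atZ; apply: ovs_scale_ge0.
Qed.

Lemma cut_ordered_vs : ordered_vs_order (fun x y => cut_pos (y - x)).
Proof. exact: (cone_ordered_vs cut_pos0 cut_pos_total cut_posD cut_posZ). Qed.

End Cut.

Section WellIndexed.
Variables (I : Type) (ltI : I -> I -> Prop).
Hypothesis hI : well_indexed ltI.

Lemma idx_trans r s t : ltI r s -> ltI s t -> ltI r t.
Proof. by case: hI => _ [+ _]; apply. Qed.

Lemma idx_total r s : ltI r s \/ r = s \/ ltI s r.
Proof. by case: hI => _ [_ []]. Qed.

Lemma idx_inhabited : inhabited I. Proof. by case: hI => _ [_ [_ [_ []]]]. Qed.

Lemma idx_succ r : exists s, ltI r s. Proof. by case: hI => _ [_ [_ [_ []]]]. Qed.

Lemma idx_above2 r s : exists t, ltI r t /\ ltI s t.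
Proof.
have [t hst] := idx_succ s; case: (idx_total r s) => [hrs|[->|hsr]].
- by exists t; split=> //; apply: (idx_trans hrs hst).
- by exists t.
- by have [u hru] := idx_succ r; exists u; split=> //; apply: (idx_trans hsr hru).
Qed.

Lemma idx_above3 r s t : exists u, [/\ ltI r u, ltI s u & ltI t u].
Proof.
have [w [hrw hsw]] := idx_above2 r s; have [u [hwu htu]] := idx_above2 w t.
by exists u; split=> //; [apply: (idx_trans hrw hwu)|apply: (idx_trans hsw hwu)].
Qed.

End WellIndexed.

Section PseudoCauchy.
Variables (C : realFieldType) (H : hamel C) (I : Type) (ltI : I -> I -> Prop).
Hypothesis hI : well_indexed ltI.
Variable b : I -> hcar H.
Local Notation lt0 := (@hlt0 C H).
Local Notation v := (@hv C H).
Local Notation O0 := (hlt0_ovs H).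

Definition pc_from (r0 : I) : Prop := forall t s r, ltI r0 r -> ltI r s -> ltI s t ->
  ltinf lt0 (v (b s - b r)) (v (b t - b s)).

Lemma pc_gap_const r0 r s t : pc_from r0 -> ltI r0 r -> ltI r s -> ltI r t ->
  v (b s - b r) = v (b t - b r).
Proof.
move=> hr0 hr; wlog hst : s t / ltI s t => [hwlog hs ht|hs _].
  case: (idx_total hI s t) => [|[<-|]] // hst; last by rewrite (hwlog t s).
  exact: hwlog.
have -> : b t - b r = (b s - b r) + (b t - b s) by rewrite [RHS]addrC addrA subrK.
by rewrite [RHS]hv_add_lt //; apply: (hr0 t s r hr hs hst).
Qed.

Lemma not_pseudolim_gap a : pc_seq ltI b -> ~ pseudolim ltI b a ->
  exists rho, forall t, ltI rho t -> ltinf lt0 (v (a - b rho)) (v (b t - b rho)).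
Proof.
case=> r0 hr0 hnl.
suff [rho [s [h0 hs hlt]]] : exists rho s,
    [/\ ltI r0 rho, ltI rho s & ltinf lt0 (v (a - b rho)) (v (b s - b rho))].
  by exists rho => t ht; rewrite -(pc_gap_const hr0 h0 hs ht).
apply: NNPP => hgap; apply: hnl; exists r0 => r s hr hrs.
have [t hst] := idx_succ hI s.
have hst_gap := hr0 t s r hr hrs hst.
have hta : leinf lt0 (v (b t - b s)) (v (a - b s)).
  apply: (leinfNlt O0) => hat; apply: hgap.
  by exists s, t; split=> //; apply: (idx_trans hI hr hrs).
have -> : a - b r = (b s - b r) + (a - b s) by rewrite [RHS]addrC addrA subrK.
by have hlt := ltinf_le_trans O0 hst_gap hta; rewrite hv_add_lt.
Qed.

End PseudoCauchy.

Section Extension.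
Variables (C : realFieldType) (G : hamel C) (P : hcar G -> Prop).
Hypothesis P_down : forall x y, hlt0 y x -> P x -> P y.
Variables (I : Type) (ltI : I -> I -> Prop) (b : I -> hcar G).
Hypotheses (hI : well_indexed ltI) (hpc : pc_seq ltI b) (hdiv : divergent ltI b).
Local Notation V := (hcar G).
Local Notation lt0 := (@hlt0 C G).
Local Notation lt1 := (@hlt1 C G).
Local Notation v := (@hv C G).
Local Notation O0 := (hlt0_ovs G).
Local Notation O1 := (hlt1_ovs G).

Definition Gh : lmodType C := (V * C^o)%type.

Local Notation phi r := (eval_at (b r)).

Definition stabilizes (x : Gh) (r : I) : Prop :=
  x = 0 \/ forall t, ltI r t -> ltinf lt0 (v (phi r x)) (v (phi t x - phi r x)).

Lemma exists_stabilizes x : exists r, stabilizes x r.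
Proof.
have [->|hx] := eqVneq x 0; first by case: (idx_inhabited hI) => r; exists r; left.
case: x hx => g l hx; have [l0|hl] := eqVneq l 0.
  case: (idx_inhabited hI) => r; exists r; right=> t _.
  rewrite l0 !eval_at_const subrr hv0.
  by case: (v g) (hv_inf g) => // -[] /(_ erefl) g0; rewrite g0 l0 eqxx in hx.
pose a := - (l^-1 *: g).
have [rho hrho] := not_pseudolim_gap hI hpc (hdiv (a := a)).
exists rho; right=> t ht.
have -> : phi t (g, l) - phi rho (g, l) = l *: (b t - b rho).
  by rewrite /eval_at /= opprD addrACA subrr add0r scalerBr.
have -> : phi rho (g, l) = (- l) *: (a - b rho).
  by rewrite /eval_at /= scaleNr scalerBr scalerN scalerA mulfV // scale1r opprD !opprK.
by rewrite !hv_scale ?oppr_eq0 //; apply: hrho.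
Qed.

Definition stab (x : Gh) : I :=
  proj1_sig (constructive_indefinite_description _ (exists_stabilizes x)).

Lemma stabP x : stabilizes x (stab x).
Proof. by rewrite /stab; case: constructive_indefinite_description. Qed.

Definition vlim (x : Gh) : option V := v (phi (stab x) x).
Definition pos1 (x : Gh) : Prop := lt1 0 (phi (stab x) x).

Lemma phi_stab_split x t : x != 0 -> ltI (stab x) t ->
  exists2 d, phi t x = phi (stab x) x + d & ltinf lt0 (v (phi (stab x) x)) (v d).
Proof.
move=> hx ht; exists (phi t x - phi (stab x) x); first by rewrite addrC subrK.
by case: (stabP x) => [/eqP|]; [rewrite (negbTE hx)|apply].
Qed.

Lemma hv_stab x t : ltI (stab x) t -> v (phi t x) = vlim x.
Proof.
have [->|hx ht] := eqVneq x 0; first by rewrite /vlim !eval_at0.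
by have [d -> hd] := phi_stab_split hx ht; rewrite hv_add_lt.
Qed.

Lemma lt1_stab x t : ltI (stab x) t -> (lt1 0 (phi t x) <-> pos1 x).
Proof.
have [->|hx ht] := eqVneq x 0; first by rewrite /pos1 !eval_at0.
by have [d -> hd] := phi_stab_split hx ht; apply: hv_add_lt_signE.
Qed.

Lemma vlim_eq0 x : vlim x = None <-> x = 0.
Proof.
split=> [hvx|->]; last by rewrite /vlim eval_at0 hv0.
apply: NNPP => /eqP hx; have [t ht] := idx_succ hI (stab x).
by have [d _] := phi_stab_split hx ht; rewrite -/(vlim x) hvx.
Qed.

Lemma pos1_0 : ~ pos1 0.
Proof. by rewrite /pos1 eval_at0; apply: (ovs_irr O1). Qed.

Lemma pos1_total x : pos1 x \/ x = 0 \/ pos1 (- x).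
Proof.
have [->|hx] := eqVneq x 0; first by right; left.
have [t [hxt hNxt]] := idx_above2 hI (stab x) (stab (- x)).
case: (ovs_total O1 0 (phi t x)) => [|[hx0|]].
- by left; apply/(lt1_stab hxt).
- by move: hx => /eqP; rewrite -vlim_eq0 -(hv_stab hxt) -hx0 hv0.
- by right; right; apply/(lt1_stab hNxt); rewrite eval_atN (ovs_oppr_gt0 O1).
Qed.

Lemma pos1D x y : pos1 x -> pos1 y -> pos1 (x + y).
Proof.
have [t [hx hy hxy]] := idx_above3 hI (stab x) (stab y) (stab (x + y)).
move=> /(lt1_stab hx) px /(lt1_stab hy) py; apply/(lt1_stab hxy).
by rewrite eval_atD; apply: (ovs_add_gt0 O1).
Qed.

Lemma pos1Z (c : C) x : 0 < c -> pos1 x -> pos1 (c *: x).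
Proof.
have [t [hx hcx]] := idx_above2 hI (stab x) (stab (c *: x)).
move=> hc /(lt1_stab hx) px; apply/(lt1_stab hcx).
by rewrite eval_atZ; apply: (ovs_scale_gt0 O1).
Qed.

Definition ltGh0 (x y : Gh) : Prop := cut_pos lt0 P (y - x).
Definition ltGh1 (x y : Gh) : Prop := pos1 (y - x).

Lemma ltGh0_ordered_vs : ordered_vs_order ltGh0.
Proof. exact: (cut_ordered_vs O0 P_down). Qed.

Lemma ltGh1_ordered_vs : ordered_vs_order ltGh1.
Proof. exact: (cone_ordered_vs pos1_0 pos1_total pos1D pos1Z). Qed.

Definition inGh (g : V) : Gh := (g, 0).
Definition vGh (x : Gh) : option Gh := omap inGh (vlim x).

Lemma inGhB g g' : inGh (g - g') = inGh g - inGh g'.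
Proof. by rewrite /inGh; congr (_, _); rewrite /= subrr. Qed.

Lemma vlim_inGh g : vlim (inGh g) = v g.
Proof. by have [t ht] := idx_succ hI (stab (inGh g)); rewrite -(hv_stab ht) eval_at_const. Qed.

Lemma pos1_inGh g : pos1 (inGh g) <-> lt1 0 g.
Proof.
by have [t ht] := idx_succ hI (stab (inGh g)); rewrite -(lt1_stab ht) eval_at_const.
Qed.

Lemma inGh_lt g g' : lt0 g g' -> ltGh0 (inGh g) (inGh g').
Proof. by rewrite /ltGh0 -inGhB cut_pos_const (ovs_subr_gt0 O0). Qed.

Lemma inGh_ltinf a c : ltinf lt0 a c -> ltinf ltGh0 (omap inGh a) (omap inGh c).
Proof. by case: a => [g|] //; case: c => [g'|] //=; apply: inGh_lt. Qed.

Lemma inGh_leinf a c : leinf lt0 a c -> leinf ltGh0 (omap inGh a) (omap inGh c).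
Proof. by case=> [/inGh_ltinf|->]; [left|right]. Qed.

Lemma vGh_eq0 x : vGh x = None <-> x = 0.
Proof. by rewrite /vGh -vlim_eq0; case: (vlim x). Qed.

Lemma vGh_add x y : leinf ltGh0 (vGh x) (vGh (x + y)) \/ leinf ltGh0 (vGh y) (vGh (x + y)).
Proof.
have [t [hx hy hxy]] := idx_above3 hI (stab x) (stab y) (stab (x + y)).
rewrite /vGh -(hv_stab hx) -(hv_stab hy) -(hv_stab hxy) eval_atD.
by case: (hv_add (phi t x) (phi t y)) => /inGh_leinf; [left|right].
Qed.

Lemma vGh_scale (c : C) x : c != 0 -> vGh (c *: x) = vGh x.
Proof.
have [t [hx hcx]] := idx_above2 hI (stab x) (stab (c *: x)).
by move=> hc; rewrite /vGh -(hv_stab hx) -(hv_stab hcx) eval_atZ hv_scale.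
Qed.

Lemma vGh_mono x y : ltGh1 0 x -> ltGh1 x y -> leinf ltGh0 (vGh y) (vGh x).
Proof.
have [t [hx hy hyx]] := idx_above3 hI (stab x) (stab y) (stab (y - x)).
rewrite /ltGh1 subr0 => /(lt1_stab hx) px /(lt1_stab hyx) pyx.
rewrite /vGh -(hv_stab hx) -(hv_stab hy); apply/inGh_leinf/(hv_mono px).
by apply/(ovs_subr_gt0 O1); rewrite -eval_atN -eval_atD.
Qed.

Lemma vGh_idem x : vinf vGh (vGh x) = vGh x.
Proof.
rewrite /vGh; case e: (vlim x) => [g|] //=; rewrite vlim_inGh.
have [t ht] := idx_succ hI (stab x).
by have := hv_idem (phi t x); rewrite (hv_stab ht) e /= => ->.
Qed.

Lemma vGh_pos x : ltinf ltGh1 (Some 0) (vGh x).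
Proof.
rewrite /vGh; case e: (vlim x) => [g|] //=; rewrite /ltGh1 subr0 pos1_inGh.
have [t ht] := idx_succ hI (stab x).
by have := hv_pos (phi t x); rewrite (hv_stab ht) e.
Qed.

Definition Gh_hamel : hamel C :=
  Hamel ltGh0_ordered_vs ltGh1_ordered_vs vGh_eq0 vGh_add vGh_scale vGh_mono vGh_idem vGh_pos.

Definition hnew : Gh := (0, 1).

Lemma eval_at_hnew_sub u g : eval_at u (hnew - inGh g) = u - g.
Proof. by rewrite /eval_at /= sub0r subr0 scale1r addrC. Qed.

Lemma inGh_embedding : hamel_embedding (H := G) (K := Gh_hamel) inGh.
Proof.
split.
- by move=> a g g'; rewrite /inGh; congr (_, _); rewrite /= scaler0 addr0.
- by move=> g g' [].
- exact: inGh_lt.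
- by move=> g g' hgg'; rewrite /= /ltGh1 -inGhB pos1_inGh (ovs_subr_gt0 O1).
- by move=> g; rewrite /= /vGh vlim_inGh.
Qed.

Lemma inGh_pseudolim : pseudolim (H := Gh_hamel) ltI (fun r => inGh (b r)) hnew.
Proof.
have [r0 hr0] := hpc; exists r0 => r s hr hrs.
have [t [hrt hst hs]] :=
  idx_above3 hI (stab (hnew - inGh (b r))) (stab (hnew - inGh (b s))) s.
rewrite /= /vGh -(hv_stab hrt) -(hv_stab hst) !eval_at_hnew_sub.
rewrite -(pc_gap_const hI hr0 hr hrs (idx_trans hI hrs hs)).
by apply: inGh_ltinf; apply: (hr0 t s r hr hrs hs).
Qed.

Lemma inGh_lt_hnew g : P g -> ltGh0 (inGh g) hnew.
Proof.
move=> pg; apply: (@cut_pos_root _ _ _ _ _ g); rewrite /= ?subr0 ?oner_eq0 ?ltr01 //.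
by rewrite eval_at_hnew_sub subrr.
Qed.

Lemma hnew_lt_inGh g : ~ P g -> ltGh0 hnew (inGh g).
Proof.
move=> npg; apply: (@cut_pos_root _ _ _ _ _ g); rewrite /= ?sub0r ?oppr_eq0 ?oner_eq0 //.
  by rewrite oppr_gt0 ltr10.
by rewrite -opprB eval_atN eval_at_hnew_sub subrr oppr0.
Qed.


Section Universality.
Variables (Gs : hamel C) (i : hcar G -> hcar Gs) (hs : hcar Gs).
Hypotheses (hi : hamel_embedding i) (hpl : pseudolim ltI (fun r => i (b r)) hs).
Hypotheses (hPs : forall x, P x -> hlt0 (i x) hs) (hnPs : forall x, ~ P x -> hlt0 hs (i x)).
Local Notation vs := (@hv C Gs).
Local Notation lts0 := (@hlt0 C Gs).
Local Notation S0 := (hlt0_ovs Gs).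
Local Notation S1 := (hlt1_ovs Gs).

Definition extend (z : Gh) : hcar Gs := i z.1 + z.2 *: hs.

Lemma extend_inGh g : extend (inGh g) = i g.
Proof. by rewrite /extend scale0r addr0. Qed.

Lemma extend_hnew : extend hnew = hs.
Proof. by rewrite /extend (emb0 hi) scale1r add0r. Qed.

Lemma extend_at u z : extend z = i (eval_at u z) + z.2 *: (hs - i u).
Proof.
by rewrite /extend /eval_at (emb_add hi) (emb_scale hi) scalerBr addrACA subrr addr0.
Qed.

Lemma extend_lin a z z' : extend (a *: z + z') = a *: extend z + extend z'.
Proof. by rewrite /extend /= (emb_lin hi) scalerDl scalerDr scalerA addrACA. Qed.

Lemma extend0 : extend 0 = 0.
Proof. by rewrite /extend (emb0 hi) scale0r addr0. Qed.

Lemma extend_sub z z' : extend (z - z') = extend z - extend z'.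
Proof. by rewrite /extend /= (emb_sub hi) scalerBl addrACA opprD. Qed.

Lemma vlim_lt_pseudolim_gap z : z.2 != 0 -> exists T, forall t, ltI T t ->
  ltinf lts0 (omap i (vlim z)) (vs (hs - i (b t))).
Proof.
move=> hz; have [s0 hs0] := hpl.
have [T0 [hs0T0 hzT0]] := idx_above2 hI s0 (stab z).
have hge s : ltI T0 s -> leinf lts0 (omap i (vlim z)) (vs (hs - i (b s))).
  move=> hT0s; have [t hst] := idx_succ hI s.
  have hs0s := idx_trans hI hs0T0 hT0s; have hzs := idx_trans hI hzT0 hT0s.
  have -> : vs (hs - i (b s)) = omap i (v (b t - b s)).
    rewrite (emb_hv hi).
    have -> : i (b t - b s) = (hs - i (b s)) + - (hs - i (b t)).
      by rewrite (emb_sub hi) opprB [RHS]addrC subrKA.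
    by rewrite [RHS]hv_add_lt // hv_opp; apply: hs0.
  apply: (emb_leinf hi); rewrite -(hv_scale _ hz).
  have -> : z.2 *: (b t - b s) = phi t z - phi s z.
    by rewrite /eval_at opprD addrACA subrr add0r scalerBr.
  apply: hv_ge_add; first by rewrite (hv_stab (idx_trans hI hzs hst)); right.
  by rewrite hv_opp (hv_stab hzs); right.
have [T hT] := idx_succ hI T0; exists T => t hTt.
exact: (leinf_lt_trans S0 (hge T hT) (hs0 T t (idx_trans hI hs0T0 hT) hTt)).
Qed.

Lemma extend_approx z : z != 0 -> exists2 t, ltI (stab z) t &
  ltinf lts0 (vs (i (phi t z))) (vs (extend z - i (phi t z))).
Proof.
move=> hz0; have [z20|hz] := eqVneq z.2 0.
  have [t ht] := idx_succ hI (stab z); exists t => //.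
  rewrite (extend_at (b t)) z20 scale0r addr0 subrr hv0 -(emb_hv hi) (hv_stab ht).
  by case: (vlim z) (vlim_eq0 z) => // -[] /(_ erefl) /eqP; rewrite (negbTE hz0).
have [T hT] := vlim_lt_pseudolim_gap hz; have [t [hzt hTt]] := idx_above2 hI (stab z) T.
exists t => //; have -> : extend z - i (phi t z) = z.2 *: (hs - i (b t)).
  by rewrite (extend_at (b t)) addrC addKr.
by rewrite hv_scale // -(emb_hv hi) (hv_stab hzt); apply: hT.
Qed.

Lemma extend_hv z : omap extend (vGh z) = vs (extend z).
Proof.
have -> : omap extend (vGh z) = omap i (vlim z).
  by rewrite /vGh; case: (vlim z) => //= g; rewrite extend_inGh.
have [->|hz0] := eqVneq z 0.
  by rewrite extend0 hv0; case: (vlim 0) (vlim_eq0 0) => // g [_ /(_ erefl)].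
have [t ht hd] := extend_approx hz0.
by rewrite -[extend z](subrKC (i (phi t z))) hv_add_lt // -(emb_hv hi) (hv_stab ht).
Qed.

Lemma extend_pos1 z : pos1 z -> hlt1 0 (extend z).
Proof.
have [->|hz0] := eqVneq z 0; first by move/pos1_0.
have [t ht hd] := extend_approx hz0.
move=> /(lt1_stab ht) hpos; rewrite -[extend z](subrKC (i (phi t z))) hv_add_lt_signE //.
by rewrite -(emb0 hi); apply: (emb_lt1 hi).
Qed.

Lemma extend_pos0 z : cut_pos lt0 P z -> lts0 0 (extend z).
Proof.
have [z20|hz] := eqVneq z.2 0.
  case: z z20 => g l /= ->; rewrite cut_pos_const /extend scale0r addr0 -(emb0 hi).
  exact: (emb_lt0 hi).
case/(cut_posE _ _ hz) => u hu hzu; rewrite (extend_at u).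
apply: (ovs_le_lt_add S0).
  by case: hzu => [/(emb_lt0 hi)|<-]; rewrite (emb0 hi); [left|right].
apply: (ovs_scale_sub_gt0 S0); move: hz; rewrite neq_lt => /orP[hz|hz].
  by right; split=> //; apply: hnPs => /hu; rewrite ltNge ltW.
by left; split=> //; apply/hPs/hu.
Qed.

Lemma extend_embedding : hamel_embedding (H := Gh_hamel) (K := Gs) extend.
Proof.
have extend_lt0 x y : ltGh0 x y -> lts0 (extend x) (extend y).
  by move=> /extend_pos0; rewrite extend_sub (ovs_subr_gt0 S0).
split=> //.
- exact: extend_lin.
- move=> x y e; case: (ovs_total (hlt0_ovs Gh_hamel) x y) => [|[|]] // /extend_lt0;
  by rewrite e => /(ovs_irr S0).
- by move=> x y /extend_pos1; rewrite extend_sub (ovs_subr_gt0 S1).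
- exact: extend_hv.
Qed.

End Universality.

End Extension.

Theorem lemma4p6 (C : realFieldType) (G : hamel C)
  (P : hcar G -> Prop)
  (hP : forall x y, hlt0 y x -> P x -> P y)
  (I : Type) (ltI : I -> I -> Prop) (hI : well_indexed ltI)
  (b : I -> hcar G) (hpc : pc_seq ltI b) (hdiv : divergent ltI b) :
  exists (G' : hamel C) (j : hcar G -> hcar G') (h : hcar G'),
    [/\ hamel_embedding j,
        pseudolim ltI (fun r => j (b r)) h,
        (forall x, P x -> hlt0 (j x) h),
        (forall x, ~ P x -> hlt0 h (j x)) &
        (forall (Gs : hamel C) (i : hcar G -> hcar Gs) (hs : hcar Gs),
          hamel_embedding i ->
          pseudolim ltI (fun r => i (b r)) hs ->
          (forall x, P x -> hlt0 (i x) hs) ->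
          (forall x, ~ P x -> hlt0 hs (i x)) ->
          exists k : hcar G' -> hcar Gs,
            [/\ hamel_embedding k, (forall x, k (j x) = i x) & k h = hs])].
Proof.
exists (Gh_hamel hP hI hpc hdiv), (@inGh C G), (hnew G); split.
- exact: inGh_embedding.
- exact: inGh_pseudolim.
- exact: inGh_lt_hnew.
- exact: hnew_lt_inGh.
- move=> Gs i hs hi hpl hPs hnPs; exists (extend i hs); split.
  + exact: extend_embedding.
  + exact: extend_inGh.
  + exact: extend_hnew.
Qed.
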